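(* In the setting of the context, for every iteration $n$ (with $R_n\neq0$): (a) $M\subset H_n:=\bigcap_{k=1}^{N_n}H(v_{n,k},\beta_{n,k})$, where $H(v,\beta)=\{x\in X:\langle v,x\rangle=\beta\}$. (b) $J_p(x_n)-J_p(x_0)$ lies in the linear span of the search directions of all previous iterations, $\mathrm{span}\bigcup_{m<n}V_m$, and hence in $\overline{\mathcal{R}(A^* )}$. (c) $x_{n+1}=\Pi^{X}_{H_n}(x_n)$, the Bregman projection of $x_n$ onto $H_n$ in $X$, and $J_p(x_{n+1})=\Pi^{X^*}_{J_p(x_n)+V_n}(J_p(z))$ for every $z\in M$, where $\Pi^{X^*}$ is the Bregman projection in $X^*$. (d) $J_{p^*}(v_{n,N_n})=\Pi^{X}_{V_{n-1}^{\perp}}(J_{p^*}(u_n))$, where $V_{n-1}^\perp=\{x\in X:\langle v,x\rangle=0\ \forall v\in V_{n-1}\}$.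
   Context: $X$ is a real smooth, uniformly convex Banach space, $Y$ a real Banach space, $A:X\to Y$ bounded linear with adjoint $A^*$, $y\in\mathcal{R}(A)$, $M=\{x:Ax=y\}$. Fix $p,r\in(1,\infty)$, $p^*=p/(p-1)$. $J_p:X\to X^*$ is the duality mapping with gauge $t^{p-1}$, $J_{p^*}:X^*\to X$ that of $X^*$ with gauge $t^{p^*-1}$ (inverse of $J_p$), $J_r^Y$ a single-valued selection of the duality mapping of $Y$ with gauge $t^{r-1}$. Bregman distance in $X$: $D_p(x,z)=\tfrac1{p^*}\|x\|^p-\langle J_p(x),z\rangle+\tfrac1p\|z\|^p$; $\Pi^X_C(x)$ is the minimizer of $D_p(x,\cdot)$ over a closed convex nonempty $C\subset X$. In $X^*$ the Bregman distance is $D_{p^*}(x^*,z^* )=\tfrac1p\|x^*\|^{p^*}-\langle z^*,J_{p^*}(x^* )\rangle+\tfrac1{p^*}\|z^*\|^{p^*}$, and $\Pi^{X^*}_C(x^* )$ minimizes $D_{p^*}(x^*,\cdot)$ over closed convex $C\subset X^*$. Method: choose $x_0$ with $J_p(x_0)\in\overline{\mathcal{R}(A^* )}$, fix $N\in\mathbb{N}$, $N_n=\min(N,n+1)$, $V_{-1}=\{0\}$. For $n=0,1,\dots$: $w_n=Ax_n-y$, $R_n=\|w_n\|$; stop if $R_n=0$. Else $u_n^*=J_r^Y(w_n)$, $u_n=A^*u_n^*$. Let $s_n$ minimize $s\mapsto\|u_n-\sum_{i=1}^{N_{n-1}}s_iv_{n-1,i}\|^{p^*}$ (empty sum for $n=0$),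 set $v_{n,N_n}=u_n-\sum_k s_{n,k}v_{n-1,k}$ with precursor $w^*_{n,N_n}=u_n^*-\sum_k s_{n,k}w^*_{n-1,k}$; $v_{n,1},\dots,v_{n,N_n-1}$ with precursors are the last $N_n-1$ entries of the previous lists, in order ($v_{n,k}=A^*w^*_{n,k}$). $V_n=\mathrm{span}\{v_{n,1},\dots,v_{n,N_n}\}$, offsets $\beta_{n,k}=\langle w^*_{n,k},y\rangle$; $t_n$ minimizes $h_n(t)=\tfrac1{p^*}\|J_p(x_n)-\sum_k t_kv_{n,k}\|^{p^*}+\sum_k t_k\beta_{n,k}$; $x_{n+1}=J_{p^*}(J_p(x_n)-\sum_k t_{n,k}v_{n,k})$. *)

From HB Require Import structures.
From mathcomp Require Import all_boot all_order all_algebra.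
From mathcomp Require Import all_classical all_reals all_analysis.
Set Implicit Arguments. Unset Strict Implicit. Unset Printing Implicit Defensive.
Import Order.TTheory GRing.Theory Num.Theory.
Import numFieldNormedType.Exports.
Local Open Scope classical_set_scope.
Local Open Scope ring_scope.

Section Defs.
Context {R : realType}.

(* Elements of the dual space V^* are represented as functions V -> R
   that are linear and continuous. *)
Definition is_functional {V : normedModType R} (f : V -> R) : Prop :=
  (forall (a : R) (u w : V), f (a *: u + w) = a * f u + f w) /\ continuous f.

Definition bounded_linear {V W : normedModType R} (A : V -> W) : Prop :=
  (forall (a : R) (u w : V), A (a *: u + w) = a *: A u + A w) /\ continuous A.

Definition dnorm {V : normedModType R} (f : V -> R) : R :=
  sup [set `|f u| | u in [set u : V | `|u| <= 1]].

Definition uniformly_convex (V : normedModType R) : Prop :=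
  forall eps : R, 0 < eps -> eps <= 2 ->
  exists2 delta : R, 0 < delta &
    forall u w : V, `|u| <= 1 -> `|w| <= 1 -> eps <= `|u - w| ->
      `|2^-1 *: (u + w)| <= 1 - delta.

Definition smooth (V : normedModType R) : Prop :=
  forall u : V, `|u| = 1 -> forall f g : V -> R,
    is_functional f -> is_functional g -> dnorm f = 1 -> dnorm g = 1 ->
    f u = 1 -> g u = 1 -> f = g.

(* f is an element of the duality mapping (gauge t^(q-1)) of V at u *)
Definition is_duality {V : normedModType R} (q : R) (u : V) (f : V -> R) : Prop :=
  is_functional f /\ f u = `|u| `^ q /\ dnorm f = `|u| `^ (q - 1).

(* u (in V, identified with the bidual) is the value of the duality mapping of V^* (gauge t^(q-1)) at f *)
Definition is_dual_duality {V : normedModType R} (q : R) (f : V -> R) (u : V) : Prop :=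
  f u = dnorm f `^ q /\ `|u| = dnorm f `^ (q - 1).

Definition pconj (p : R) : R := p / (p - 1).

Definition Dp {V : normedModType R} (p : R) (J : V -> V -> R) (u z : V) : R :=
  (pconj p)^-1 * `|u| `^ p - J u z + p^-1 * `|z| `^ p.

Definition Dps {V : normedModType R} (p : R) (Jps : (V -> R) -> V)
  (us zs : V -> R) : R :=
  p^-1 * dnorm us `^ pconj p - zs (Jps us) + (pconj p)^-1 * dnorm zs `^ pconj p.

(* J_p(x0) lies in the norm closure of the range of A^* *)
Definition in_closure_range_adj {V W : normedModType R} (A : V -> W)
  (f : V -> R) : Prop :=
  forall eps : R, 0 < eps -> exists g : W -> R,
    is_functional g /\ dnorm (fun z => f z - g (A z)) < eps.

Definition lincomb {V : Type} (K : nat) (c : nat -> R) (v : nat -> V -> R) : V -> R :=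
  fun z => \sum_(k < K) c k * v k z.

End Defs.

(* N_n = min(N, n+1); Nprev N n = N_{n-1} = min(N, n) (so N_{-1} = 0). *)
Definition Nn (N n : nat) : nat := minn N n.+1.
Definition Nprev (N n : nat) : nat := minn N n.

(* Iteration m of the method (with R_m <> 0). Indices k are 0-based:
   v m k, k < Nn N m, is v_{m,k+1} of the paper, ws m k its precursor
   w^*_{m,k+1}; s m k = s_{m,k+1}, t m k = t_{m,k+1}. *)
Definition algo_step {R : realType} {X Y : normedModType R}
  (A : X -> Y) (y : Y) (p : R) (N : nat)
  (J : X -> X -> R) (Jps : (X -> R) -> X) (Jr : Y -> Y -> R)
  (x : nat -> X) (v : nat -> nat -> X -> R) (ws : nat -> nat -> Y -> R)
  (s t : nat -> nat -> R) (m : nat) : Prop :=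
  let w := A (x m) - y in
  let us := Jr w in
  let u := fun z => us (A z) in
  let vnew := fun z => u z - lincomb (Nprev N m) (s m) (v m.-1) z in
  let h := fun c : nat -> R =>
    (pconj p)^-1 * dnorm (fun z => J (x m) z - lincomb (Nn N m) c (v m) z) `^ pconj p
    + \sum_(k < Nn N m) c k * ws m k y in
  `|w| <> 0 /\
  (forall c : nat -> R,
     dnorm vnew `^ pconj p <=
     dnorm (fun z => u z - lincomb (Nprev N m) c (v m.-1) z) `^ pconj p) /\
  v m (Nn N m).-1 = vnew /\
  ws m (Nn N m).-1 = (fun z => us z - lincomb (Nprev N m) (s m) (ws m.-1) z) /\
  (forall k : nat, (k < (Nn N m).-1)%N ->
     v m k = v m.-1 (Nprev N m - (Nn N m).-1 + k)%N /\
     ws m k = ws m.-1 (Nprev N m - (Nn N m).-1 + k)%N) /\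
  (forall c : nat -> R, h (t m) <= h c) /\
  x m.+1 = Jps (fun z => J (x m) z - lincomb (Nn N m) (t m) (v m) z).

(* Everything follows from first-order optimality conditions for the two finite-
   dimensional minimizations that define [s_n] and [t_n].  Because [X] is uniformly
   convex, the map [f |-> ||f||^q / q] on [X^*], with [q = p^*], is Gateaux
   differentiable with derivative [e |-> e (J_q f)], so a minimizer [c] of
   [||g - sum_k c_k v_k||^q / q + sum_k c_k beta_k] satisfies
   [v_k (J_q (g - sum_k c_k v_k)) = beta_k].  Smoothness of [X] makes [J_p] invert
   [J_q], hence [J_p x_(n+1) = J_p x_n - sum_k t_(n,k) v_(n,k)]; an induction shows
   [v_(n,k) = A^* w^*_(n,k)], so [v_(n,k)] equals [beta_(n,k)] on [M].  The Bregman
   projection statements then follow from Young's inequality. *)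

From HB Require Import structures.
From mathcomp Require Import all_boot all_order all_algebra.
From mathcomp Require Import all_classical all_reals all_analysis.
From mathcomp Require Import ring lra zify.
Import Order.TTheory GRing.Theory Num.Theory.
Import numFieldNormedType.Exports.
Local Open Scope classical_set_scope.
Local Open Scope ring_scope.
Set Implicit Arguments. Unset Strict Implicit. Unset Printing Implicit Defensive.

(** * Continuous linear functionals and the dual norm *)

Section Functionals.
Context {R : realType} {V : normedModType R}.
Implicit Types (f g : V -> R).

Definition is_linear f := forall (a : R) (u w : V), f (a *: u + w) = a * f u + f w.
Definition is_bounded f := exists C : R, forall u, `|f u| <= C * `|u|.

Lemma is_linear0 f : is_linear f -> f 0 = 0.
Proof.
move=> hf; have := hf 1 0 0; rewrite scale1r addr0 mul1r => h.
by apply: (addrI (f 0)); rewrite addr0 -h.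
Qed.

Lemma is_linearZ f : is_linear f -> forall a u, f (a *: u) = a * f u.
Proof. by move=> hf a u; have := hf a u 0; rewrite addr0 is_linear0 // addr0. Qed.

Lemma is_linearD f : is_linear f -> forall u w, f (u + w) = f u + f w.
Proof. by move=> hf u w; have := hf 1 u w; rewrite scale1r mul1r. Qed.

Lemma is_linearN f : is_linear f -> forall u, f (- u) = - f u.
Proof. by move=> hf u; rewrite -scaleN1r is_linearZ // mulN1r. Qed.

Lemma is_linearB f : is_linear f -> forall u w, f (u - w) = f u - f w.
Proof. by move=> hf u w; rewrite is_linearD // is_linearN. Qed.

Lemma is_bounded_gt0 f : is_bounded f ->
  exists2 C : R, 0 < C & forall u, `|f u| <= C * `|u|.
Proof.
case=> C hC; exists (`|C| + 1); first by rewrite ltr_wpDl.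
move=> u; apply: (le_trans (hC u)); apply: ler_wpM2r => //.
by apply: le_trans (ler_norm _) _; rewrite lerDl.
Qed.

Lemma continuous_is_bounded f : is_linear f -> continuous f -> is_bounded f.
Proof.
move=> hl hc; have := hc 0 => /cvgrPdist_lt /(_ 1 ltr01).
rewrite is_linear0 // => /nbhs_normP [d d0 hd].
exists (2 / d) => u; have [->|u0] := eqVneq u 0.
  by rewrite is_linear0 // !normr0 mulr0.
have nu : 0 < `|u| by rewrite normr_gt0.
have c0 : 0 < d / (2 * `|u|) by rewrite divr_gt0 // mulr_gt0.
have : `|f ((d / (2 * `|u|)) *: u)| < 1.
  have := hd ((d / (2 * `|u|)) *: u); rewrite /= !sub0r !normrN; apply.
  rewrite /ball_ /= normrZ (ger0_norm (ltW c0)).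
  by rewrite invfM mulrA mulfVK ?gt_eqF // gtr_pMr // invf_lt1 // ltr1n.
rewrite is_linearZ // normrM (ger0_norm (ltW c0)) -ltr_pdivlMl // mulr1 => h.
have -> : 2 / d * `|u| = (d / (2 * `|u|))^-1 by rewrite invfM invrK; ring.
exact: ltW h.
Qed.

Lemma is_bounded_continuous f : is_linear f -> is_bounded f -> continuous f.
Proof.
move=> hl /is_bounded_gt0 [C C0 hC] x.
apply/cvgrPdist_lt => e e0; near=> z.
rewrite -is_linearB //; apply: (le_lt_trans (hC _)).
rewrite -ltr_pdivlMl //.
near: z; apply: cvgr_dist_lt => //; by rewrite mulr_gt0 ?invr_gt0.
Unshelve. all: by end_near. Qed.

Lemma is_functionalP f : is_functional f <-> is_linear f /\ is_bounded f.
Proof.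
split=> [[hl hc]|[hl hb]]; first by split => //; exact: continuous_is_bounded.
by split => //; exact: is_bounded_continuous.
Qed.

Lemma is_functional_linear f : is_functional f -> is_linear f.
Proof. by case. Qed.

Lemma is_functional_bounded f : is_functional f -> is_bounded f.
Proof. by move/is_functionalP => []. Qed.

Lemma is_functional0 : is_functional (fun _ : V => 0 : R).
Proof.
apply/is_functionalP; split; first by move=> a u w; ring.
by exists 0 => u; rewrite normr0 mul0r.
Qed.

Lemma is_functionalD f g : is_functional f -> is_functional g ->
  is_functional (fun z => f z + g z).
Proof.
move=> /is_functionalP [hf [C hC]] /is_functionalP [hg [D hD]].
apply/is_functionalP; split; first by move=> a u w; rewrite hf hg; ring.
exists (C + D) => u; apply: (le_trans (ler_normD _ _)).
by rewrite mulrDl lerD.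
Qed.

Lemma is_functionalZ f c : is_functional f -> is_functional (fun z => c * f z).
Proof.
move=> /is_functionalP [hf [C hC]]; apply/is_functionalP; split.
  by move=> a u w; rewrite hf; ring.
by exists (`|c| * C) => u; rewrite normrM -mulrA ler_wpM2l.
Qed.

Lemma is_functionalN f : is_functional f -> is_functional (fun z => - f z).
Proof.
move=> hf; rewrite (_ : (fun z => - f z) = (fun z => -1 * f z)).
  exact: is_functionalZ.
by apply: funext => z; rewrite mulN1r.
Qed.

Lemma is_functionalB f g : is_functional f -> is_functional g ->
  is_functional (fun z => f z - g z).
Proof. by move=> hf hg; apply: is_functionalD => //; apply: is_functionalN. Qed.

Lemma is_functional_sum K (F : nat -> V -> R) :
  (forall i, (i < K)%N -> is_functional (F i)) ->
  is_functional (fun z => \sum_(i < K) F i z).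
Proof.
elim: K => [|K IH] hF.
  rewrite (_ : (fun z => _) = fun _ => 0); first exact: is_functional0.
  by apply: funext => z; rewrite big_ord0.
rewrite (_ : (fun z => _) = fun z => \sum_(i < K) F i z + F K z); last first.
  by apply: funext => z; rewrite big_ord_recr.
by apply: is_functionalD; [apply: IH => i hi; apply: hF; apply: ltnW|apply: hF].
Qed.

Lemma is_functional_lincomb K c (w : nat -> V -> R) :
  (forall k, (k < K)%N -> is_functional (w k)) -> is_functional (lincomb K c w).
Proof.
move=> hw; apply: (is_functional_sum (F := fun k z => c k * w k z)) => k hk.
by apply: is_functionalZ; apply: hw.
Qed.

End Functionals.

Lemma is_functional_comp {R : realType} {V W : normedModType R} (A : V -> W)
    (g : W -> R) :
  bounded_linear A -> is_functional g -> is_functional (fun z => g (A z)).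
Proof.
move=> [hA hAc] [hg hgc]; split; first by move=> a u w; rewrite hA hg.
by move=> z; exact: (continuous_comp (hAc z) (hgc (A z))).
Qed.

Section DualNorm.
Context {R : realType} {V : normedModType R}.
Implicit Types (f : V -> R).

Lemma dnorm_has_sup f : is_bounded f ->
  has_sup [set `|f u| | u in [set u : V | `|u| <= 1]].
Proof.
case=> C hC; split; first by exists `|f 0|, 0 => //=; rewrite normr0.
exists `|C| => _ [u hu <-]; apply: (le_trans (hC u)).
apply: (@le_trans _ _ (`|C| * `|u|)); first by apply: ler_wpM2r => //; exact: ler_norm.
by rewrite -[leRHS]mulr1; apply: ler_wpM2l.
Qed.

Lemma dnorm_ge f u : is_bounded f -> `|u| <= 1 -> `|f u| <= dnorm f.
Proof.
move=> hb hu; have [_ hub] := dnorm_has_sup hb.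
by apply: (ub_le_sup hub); exists u.
Qed.

Lemma dnorm_le f B : (forall u, `|u| <= 1 -> `|f u| <= B) -> dnorm f <= B.
Proof.
move=> h; apply: ge_sup; first by exists `|f 0|, 0 => //=; rewrite normr0.
by move=> _ [u hu <-]; exact: h.
Qed.

Lemma dnorm_le_linear f B : is_linear f -> (forall u, `|u| <= 1 -> f u <= B) ->
  dnorm f <= B.
Proof.
move=> hl hB; apply: dnorm_le => u nu; have [pos|neg] := lerP 0 (f u).
  by rewrite ger0_norm //; apply: hB.
by rewrite ltr0_norm // -is_linearN //; apply: hB; rewrite normrN.
Qed.

Lemma dnorm_ge0 f : is_bounded f -> 0 <= dnorm f.
Proof. by move=> hb; apply: le_trans (dnorm_ge (u := 0) hb _); rewrite ?normr0. Qed.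

Lemma dnorm_bound f u : is_functional f -> `|f u| <= dnorm f * `|u|.
Proof.
move=> /is_functionalP [hl hb].
have [->|u0] := eqVneq u 0; first by rewrite is_linear0 // !normr0 mulr0.
have nu : 0 < `|u| by rewrite normr_gt0.
have := @dnorm_ge f (`|u|^-1 *: u) hb.
rewrite normrZ normfV normr_id mulVf ?gt_eqF // lexx is_linearZ // normrM.
by rewrite normfV normr_id => /(_ isT); rewrite ler_pdivrMl // mulrC.
Qed.

Lemma dnorm_le_lipschitz f B : 0 <= B -> (forall u, `|f u| <= B * `|u|) ->
  dnorm f <= B.
Proof.
move=> B0 h; apply: dnorm_le => u hu; apply: (le_trans (h u)).
by rewrite -[leRHS]mulr1; apply: ler_wpM2l.
Qed.

Lemma dnorm_eq0 f : is_functional f -> dnorm f = 0 -> forall u, f u = 0.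
Proof.
move=> hf h0 u; have := dnorm_bound u hf; rewrite h0 mul0r.
by rewrite normr_le0 => /eqP.
Qed.

Lemma dnormZ f c : is_functional f -> dnorm (fun z => c * f z) = `|c| * dnorm f.
Proof.
move=> hf; have hcf := is_functionalZ c hf.
have D0 := dnorm_ge0 (is_functional_bounded hf).
apply/eqP; rewrite eq_le; apply/andP; split.
  apply: dnorm_le_lipschitz; first by rewrite mulr_ge0.
  by move=> u; rewrite normrM -mulrA ler_wpM2l // dnorm_bound.
have [->|c0] := eqVneq c 0.
  by rewrite normr0 mul0r; apply/dnorm_ge0/is_functional_bounded/is_functionalZ.
have nc : 0 < `|c| by rewrite normr_gt0.
have Dc0 := dnorm_ge0 (is_functional_bounded hcf).
have ncV : 0 < `|c|^-1 by rewrite invr_gt0.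
rewrite -(ler_pM2l ncV) mulKf ?gt_eqF //.
apply: dnorm_le_lipschitz; first by rewrite mulr_ge0 // invr_ge0 ltW.
move=> u; rewrite -[f u](mulKf c0).
rewrite normrM normfV -mulrA ler_pM2l ?invr_gt0 //.
exact: (dnorm_bound u hcf).
Qed.

End DualNorm.

(** * Conjugate exponents and duality mappings *)

Section ConjugateExponent.
Context {R : realType}.
Variable p : R.
Hypothesis hp : 1 < p.
Local Notation q := (pconj p).

Lemma exponent_gt0 : 0 < p. Proof. exact: lt_trans hp. Qed.

Lemma exponent_sub1_gt0 : 0 < p - 1. Proof. by rewrite subr_gt0. Qed.

Lemma pconj_gt1 : 1 < q.
Proof.
rewrite /pconj ltr_pdivlMr ?exponent_sub1_gt0 // mul1r.
by rewrite ltrBlDr ltrDl ltr01.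
Qed.

Lemma pconj_gt0 : 0 < q. Proof. exact: lt_trans pconj_gt1. Qed.

Lemma invr_add_pconj : p^-1 + q^-1 = 1.
Proof.
have h1 := exponent_sub1_gt0; have h0 := exponent_gt0.
by rewrite /pconj invfM invrK; field; rewrite gt_eqF.
Qed.

Lemma pconj_sub1_mul : (q - 1) * (p - 1) = 1.
Proof. by rewrite /pconj; field; rewrite gt_eqF ?exponent_sub1_gt0. Qed.

Lemma pconj_sub1_mulp : (q - 1) * p = q.
Proof. by rewrite /pconj; field; rewrite gt_eqF ?exponent_sub1_gt0. Qed.

Lemma exponent_sub1_mul_pconj : (p - 1) * q = p.
Proof. by rewrite /pconj; field; rewrite gt_eqF ?exponent_sub1_gt0. Qed.

Lemma pconj_sub1_neq0 : q - 1 != 0.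
Proof. by rewrite subr_eq0 gt_eqF // pconj_gt1. Qed.

Lemma exponent_sub1_neq0 : p - 1 != 0.
Proof. by rewrite gt_eqF // exponent_sub1_gt0. Qed.

Lemma young_pconj a b : 0 <= a -> 0 <= b -> a * b <= a `^ p / p + b `^ q / q.
Proof.
move=> a0 b0; apply: conjugate_powR => //.
- exact: exponent_gt0.
- exact: pconj_gt0.
- exact: invr_add_pconj.
Qed.

End ConjugateExponent.

Section Geometry.
Context {R : realType} {V : normedModType R}.
Implicit Types (f g : V -> R) (u w : V).

Lemma normrZ_invr_norm u : u != 0 -> `|(`|u|^-1 *: u)| = 1.
Proof. by move=> u0; rewrite normrZ normfV normr_id mulVf ?normr_eq0. Qed.

Lemma smooth_norming_eq f g u : smooth V -> u != 0 ->
  is_functional f -> is_functional g -> dnorm f = dnorm g ->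
  f u = dnorm f * `|u| -> g u = dnorm g * `|u| -> f = g.
Proof.
move=> hs u0 hf hg efg fu gu; set d := dnorm f in efg fu.
have [d0|dpos] := eqVneq d 0.
  apply: funext => z; rewrite (dnorm_eq0 hf d0) (dnorm_eq0 hg) //.
  by rewrite -efg.
have nu : 0 < `|u| by rewrite normr_gt0.
have hF := is_functionalZ d^-1 hf; have hG := is_functionalZ d^-1 hg.
have d_gt0 : 0 < d.
  by rewrite lt_def dpos dnorm_ge0 //; apply: is_functional_bounded.
have unit_dnorm (h : V -> R) :
    is_functional h -> dnorm h = d -> dnorm (fun z => d^-1 * h z) = 1.
  by move=> hh dh; rewrite dnormZ // dh normfV gtr0_norm ?mulVf.
have norming (h : V -> R) :
    is_functional h -> h u = d * `|u| -> d^-1 * h (`|u|^-1 *: u) = 1.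
  move=> hh hu; rewrite (is_linearZ (is_functional_linear hh)) hu.
  by field; rewrite !gt_eqF.
have gu' : g u = d * `|u| by rewrite gu efg.
have eFG := hs _ (normrZ_invr_norm u0) _ _ hF hG (unit_dnorm _ hf erefl)
  (unit_dnorm _ hg (esym efg)) (norming _ hf fu) (norming _ hg gu').
apply: funext => z; have /= := congr1 (fun h => d * h z) eFG.
by rewrite !mulVKf.
Qed.

Lemma uniformly_convex_mid_eq (a : R) u w : uniformly_convex V ->
  `|u| <= a -> `|w| <= a -> a <= `|2^-1 *: (u + w)| -> u = w.
Proof.
move=> huc hu hw hmid.
have a0 : 0 <= a := le_trans (normr_ge0 _) hu.
have [a_eq0|apos] := eqVneq a 0.
  by move: hu hw; rewrite a_eq0 !normr_le0 => /eqP -> /eqP ->.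
have a_gt0 : 0 < a by rewrite lt_def apos.
have [//|uw] := eqVneq u w.
pose uh := a^-1 *: u; pose wh := a^-1 *: w.
have nuh : `|uh| <= 1 by rewrite normrZ normfV gtr0_norm // ler_pdivrMl // mulr1.
have nwh : `|wh| <= 1 by rewrite normrZ normfV gtr0_norm // ler_pdivrMl // mulr1.
have d_gt0 : 0 < `|uh - wh|.
  by rewrite normr_gt0 -scalerBr scaler_eq0 invr_eq0 negb_or apos subr_eq0.
have d_le2 : `|uh - wh| <= 2.
  by apply: le_trans (ler_normB _ _) _; lra.
have [del del0 hdel] := huc _ d_gt0 d_le2.
have := hdel _ _ nuh nwh (lexx _).
rewrite /uh /wh -scalerDr scalerA mulrC -scalerA normrZ normfV gtr0_norm //.
by rewrite ler_pdivrMl // => h; exfalso; nra.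
Qed.

End Geometry.

Section DualityMappings.
Context {R : realType} {X : normedModType R}.
Variables (p : R) (J : X -> X -> R) (Jps : (X -> R) -> X).
Hypothesis hp : 1 < p.
Hypothesis hJ : forall z : X, is_duality p z (J z).
Hypothesis hJps : forall f : X -> R, is_functional f ->
  is_dual_duality (pconj p) f (Jps f).
Local Notation q := (pconj p).
Implicit Types (f : X -> R) (z : X).

Lemma duality_functional z : is_functional (J z). Proof. by case: (hJ z). Qed.

Lemma duality_self z : J z z = `|z| `^ p. Proof. by case: (hJ z) => _ []. Qed.

Lemma dnorm_duality z : dnorm (J z) = `|z| `^ (p - 1).
Proof. by case: (hJ z) => _ []. Qed.

Lemma dual_duality_self f : is_functional f -> f (Jps f) = dnorm f `^ q.
Proof. by move=> /hJps []. Qed.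

Lemma norm_dual_duality f : is_functional f -> `|Jps f| = dnorm f `^ (q - 1).
Proof. by move=> /hJps []. Qed.

Lemma norm_dual_duality_powR f : is_functional f -> `|Jps f| `^ p = dnorm f `^ q.
Proof. by move=> hf; rewrite norm_dual_duality // -powRrM (pconj_sub1_mulp hp). Qed.

Lemma young_functional f z : is_functional f ->
  f z <= `|z| `^ p / p + dnorm f `^ q / q.
Proof.
move=> hf; apply: le_trans (ler_norm _) _; apply: le_trans (dnorm_bound z hf) _.
rewrite mulrC; apply: young_pconj => //.
exact/dnorm_ge0/is_functional_bounded.
Qed.

Lemma dual_duality_unit f : is_functional f -> 0 < dnorm f -> exists uh,
  [/\ `|uh| = 1, f uh = dnorm f & Jps f = dnorm f `^ (q - 1) *: uh].
Proof.
move=> hf N_gt0; set u := Jps f; set P := dnorm f `^ (q - 1).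
have nu : `|u| = P by rewrite /u norm_dual_duality.
have P0 : 0 < P by rewrite powR_gt0.
have u0 : u != 0 by rewrite -normr_eq0 nu gt_eqF.
exists (`|u|^-1 *: u); split; first exact: normrZ_invr_norm.
  rewrite (is_linearZ (is_functional_linear hf)) dual_duality_self // nu.
  rewrite -(mulr_powRB1 (ltW N_gt0) (pconj_gt0 hp)) -/P.
  by rewrite mulrC mulfK ?gt_eqF.
by rewrite scalerA nu mulfV ?gt_eqF // scale1r.
Qed.

Lemma dual_duality_max f z : is_functional f ->
  f z - `|z| `^ p / p <= f (Jps f) - `|Jps f| `^ p / p.
Proof.
move=> hf; rewrite dual_duality_self // norm_dual_duality_powR //.
have -> : dnorm f `^ q - dnorm f `^ q / p = dnorm f `^ q / q.
  by rewrite -[X in X - _]mulr1 -(invr_add_pconj hp); ring.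
have := young_functional z hf; lra.
Qed.

Lemma Dp_ge0 z w : 0 <= Dp p J z w.
Proof.
have := young_functional w (duality_functional z).
rewrite dnorm_duality -powRrM (exponent_sub1_mul_pconj hp) /Dp; lra.
Qed.

Lemma duality_dual_duality : smooth X ->
  forall f, is_functional f -> J (Jps f) = f.
Proof.
move=> hs f hf; set u := Jps f; set d := dnorm f.
have d0 : 0 <= d by apply/dnorm_ge0/is_functional_bounded.
have [u0|u0] := eqVneq u 0.
  have d_eq0 : d = 0.
    apply: (powR_eq0_eq0 (p := q - 1)).
    by rewrite -norm_dual_duality // -/u u0 normr0.
  apply: funext => z; rewrite (dnorm_eq0 hf d_eq0).
  rewrite (dnorm_eq0 (duality_functional u)) //.
  by rewrite dnorm_duality u0 normr0 powR0 // exponent_sub1_neq0.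
have nu : `|u| = d `^ (q - 1) by rewrite norm_dual_duality.
symmetry; apply: (smooth_norming_eq hs u0 hf (duality_functional u)); rewrite -/d.
- by rewrite dnorm_duality nu -powRrM (pconj_sub1_mul hp) powRr1.
- by rewrite dual_duality_self // nu mulr_powRB1 // pconj_gt0.
- by rewrite duality_self dnorm_duality mulrC mulr_powRB1 ?exponent_gt0.
Qed.

Lemma dual_duality_duality : uniformly_convex X -> forall z, Jps (J z) = z.
Proof.
move=> huc z; have hg := duality_functional z; set u := Jps (J z).
have nu : `|u| = `|z|.
  rewrite norm_dual_duality // dnorm_duality -powRrM mulrC.
  by rewrite (pconj_sub1_mul hp) powRr1.
have [z0|z0] := eqVneq z 0.
  by rewrite [RHS]z0; apply/eqP; rewrite -normr_eq0 nu z0 normr0.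
have nz : 0 < `|z| `^ (p - 1) by rewrite powR_gt0 // normr_gt0.
apply: (uniformly_convex_mid_eq huc); rewrite ?nu //.
rewrite -(ler_pM2l nz) -dnorm_duality.
have -> : dnorm (J z) * `|z| = J z (2^-1 *: (u + z)).
  have hl := is_functional_linear hg.
  rewrite is_linearZ // is_linearD // dual_duality_self // duality_self.
  rewrite dnorm_duality -powRrM (exponent_sub1_mul_pconj hp) mulrC.
  by rewrite mulr_powRB1 ?(exponent_gt0 hp) //; field.
exact: le_trans (ler_norm _) (dnorm_bound _ hg).
Qed.

End DualityMappings.

(** * Differentiability of the dual norm *)

Lemma powR_continuous_at {R : realType} (r a : R) : 0 < a ->
  forall kap, 0 < kap -> exists2 rho, 0 < rho &
    forall c, `|a - c| < rho -> `|a `^ r - c `^ r| < kap.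
Proof.
move=> a0 kap kap0.
have hd : derivable (@powR R ^~ r) a 1.
  by apply: derivable_powR; rewrite in_itv /= andbT.
have : {for a, continuous (@powR R ^~ r)}.
  by apply/differentiable_continuous; rewrite -derivable1_diffP.
move=> /cvgrPdist_lt /(_ kap kap0) /nbhs_normP [rho rho0 hrho].
by exists rho => // c hc; apply: hrho.
Qed.

Lemma powR_small {R : realType} (r kap : R) : 0 < r -> 0 < kap ->
  exists2 rho, 0 < rho & forall c, 0 <= c -> c <= rho -> c `^ r <= kap.
Proof.
move=> r0 kap0; exists (kap `^ r^-1); first exact: powR_gt0.
move=> c c0 hc; apply: le_trans (ge0_ler_powR (ltW r0) _ _ hc) _.
- by rewrite nnegrE.
- by rewrite nnegrE powR_ge0.
by rewrite -powRrM mulVf ?gt_eqF // powRr1 // ltW.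
Qed.

Lemma powR_sub_le_tangent {R : realType} (r a c : R) : 1 < r -> 0 <= a -> 0 <= c ->
  r^-1 * c `^ r - r^-1 * a `^ r <= c `^ (r - 1) * (c - a).
Proof.
move=> hr a0 c0; have r0 := exponent_gt0 hr.
have := young_pconj hr a0 (powR_ge0 c (r - 1)).
rewrite -powRrM (exponent_sub1_mul_pconj hr) => hy.
have -> : c `^ (r - 1) * (c - a) = c `^ r - a * c `^ (r - 1).
  by rewrite -(mulr_powRB1 c0 r0); ring.
have split_cr : c `^ r = c `^ r / r + c `^ r / pconj r.
  by rewrite -mulrDr (invr_add_pconj hr) mulr1.
have ea : a `^ r / r = r^-1 * a `^ r by rewrite mulrC.
have ec : c `^ r / r = r^-1 * c `^ r by rewrite mulrC.
lra.
Qed.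

Definition slope_le {R : realType} (phi : R -> R) (a : R) : Prop :=
  forall eta, 0 < eta -> exists2 tau, 0 < tau &
    forall eps, `|eps| <= tau -> phi eps - phi 0 <= eps * a + `|eps| * eta.

Lemma slope_le_argmin {R : realType} (phi : R -> R) (a b : R) : slope_le phi a ->
  (forall eps, phi 0 <= phi eps + eps * b) -> a + b = 0.
Proof.
move=> hphi hmin; apply/eqP; apply: contraT => ab0.
have eta0 : 0 < `|a + b| / 2 by rewrite divr_gt0 // normr_gt0.
have [tau tau0 htau] := hphi _ eta0.
have tau_norm : `|tau| <= tau by rewrite gtr0_norm.
have tauN_norm : `|- tau| <= tau by rewrite normrN gtr0_norm.
have := htau _ tau_norm; have := htau _ tauN_norm; have := hmin tau; have := hmin (- tau).
rewrite normrN gtr0_norm // !mulNr => hmN hmP hN hP.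
have hP' : - (a + b) <= `|a + b| / 2.
  by rewrite -(ler_pM2l tau0) mulrN mulrDr; lra.
have hN' : a + b <= `|a + b| / 2.
  by rewrite -(ler_pM2l tau0) mulrDr; lra.
have : `|a + b| <= `|a + b| / 2.
  by rewrite ler_norml; apply/andP; split; lra.
have := normr_gt0 (a + b); rewrite ab0; lra.
Qed.

Lemma perturbed_slope_le {R : realType} (P s eta : R) : 0 <= P -> 0 < eta ->
  exists2 kap, 0 < kap & forall Y eps, `|P - Y| <= kap ->
    Y * (eps * s + `|eps| * (eta / (2 * (P + 1)))) <= eps * (P * s) + `|eps| * eta.
Proof.
move=> P0 eta0; have s1 : 0 < `|s| + 1 by rewrite ltr_wpDl.
have P1 : 0 < P + 1 by rewrite ltr_wpDl.
set kap := Num.min 1 (eta / (2 * (`|s| + 1))); set eta' := eta / (2 * (P + 1)).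
exists kap; first by rewrite lt_min ltr01 divr_gt0 ?mulr_gt0.
move=> Y eps hY; have kap0 : 0 <= kap := le_trans (normr_ge0 _) hY.
have kap_s : `|eps| * (kap * `|s|) <= `|eps| * (eta / 2).
  apply: ler_wpM2l => //.
  have -> : eta / 2 = eta / (2 * (`|s| + 1)) * (`|s| + 1) by field; rewrite gt_eqF.
  by apply: ler_pM; rewrite ?lerDl // /kap ge_min lexx orbT.
have h1 : (Y - P) * (eps * s) <= `|eps| * (kap * `|s|).
  apply: le_trans (ler_norm _) _; rewrite !normrM distrC mulrCA.
  by apply: ler_wpM2l => //; apply: ler_wpM2r.
have h2 : Y <= P + 1.
  have kap1 : kap <= 1 by rewrite /kap ge_min lexx.
  by have := ler_norm (Y - P); rewrite distrC => hYP; lra.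
have eta'0 : 0 <= eta' by apply/ltW/divr_gt0 => //; rewrite mulr_gt0.
have h3 : Y * (`|eps| * eta') <= (P + 1) * (`|eps| * eta').
  by apply: ler_wpM2r => //; rewrite mulr_ge0.
have -> : Y * (eps * s + `|eps| * eta') =
  eps * (P * s) + (Y - P) * (eps * s) + Y * (`|eps| * eta') by ring.
have -> : `|eps| * eta = `|eps| * (eta / 2) + (P + 1) * (`|eps| * eta').
  by rewrite /eta'; field; rewrite gt_eqF.
lra.
Qed.

Section UniformConvexity.
Context {R : realType} {X : normedModType R}.
Hypothesis huc : uniformly_convex X.
Implicit Types (f e : X -> R) (x uh : X).

Lemma uniformly_convex_slice f uh c : is_functional f -> `|uh| = 1 ->
  f uh = dnorm f -> 0 < c -> c <= 2 -> exists2 del, 0 < del &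
    forall x, `|x| <= 1 -> c <= `|x - uh| -> f x <= (1 - del) * dnorm f.
Proof.
move=> hf nuh fuh c0 c2; have [del del0 hdel] := huc c0 c2.
exists (2 * del); first by rewrite mulr_gt0.
move=> x nx far; have N0 := dnorm_ge0 (is_functional_bounded hf).
have nuh1 : `|uh| <= 1 by rewrite nuh.
have hm := hdel x uh nx nuh1 far.
have : f (2^-1 *: (x + uh)) <= dnorm f * (1 - del).
  apply: le_trans (ler_norm _) _; apply: le_trans (dnorm_bound _ hf) _.
  exact: ler_wpM2l.
rewrite (is_linearZ (is_functional_linear hf)).
rewrite (is_linearD (is_functional_linear hf)) fuh mulrBr mulr1 => hfm.
have -> : (1 - 2 * del) * dnorm f = dnorm f - 2 * (dnorm f * del) by ring.
lra.
Qed.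

Lemma dnorm_add_le f e uh : is_functional f -> is_functional e ->
  `|uh| = 1 -> f uh = dnorm f -> 0 < dnorm f ->
  forall eta, 0 < eta -> exists2 tau, 0 < tau & forall eps, `|eps| <= tau ->
    dnorm (fun z => f z + eps * e z) <= dnorm f + eps * e uh + `|eps| * eta.
Proof.
move=> hf he nuh fuh N_gt0 eta eta0.
set N := dnorm f in fuh N_gt0 *; set D := dnorm e.
have D0 : 0 <= D by apply/dnorm_ge0/is_functional_bounded.
have D1 : 0 < D + 1 by rewrite ltr_wpDl.
set c := Num.min (eta / (D + 1)) 2.
have c0 : 0 < c by rewrite lt_min ltr0n andbT divr_gt0.
have c2 : c <= 2 by rewrite /c ge_min lexx orbT.
have [del del0 hdel] := uniformly_convex_slice hf nuh fuh c0 c2.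
pose tau := del * N / (2 * (D + 1)).
exists tau; first by rewrite divr_gt0 ?mulr_gt0.
move=> eps heps.
have key x : `|x| <= 1 -> f x + eps * e x <= N + eps * e uh + `|eps| * eta.
  move=> nx.
  have fx : f x <= N.
    apply: le_trans (ler_norm _) _; apply: le_trans (dnorm_bound x hf) _.
    by rewrite -/N -[leRHS]mulr1; apply: ler_wpM2l => //; exact: ltW.
  have ex : eps * e (x - uh) <= `|eps| * (D * `|x - uh|).
    apply: le_trans (ler_norm _) _; rewrite normrM.
    exact: ler_wpM2l (dnorm_bound _ he).
  have -> : eps * e x = eps * e uh + eps * e (x - uh).
    by rewrite (is_linearB (is_functional_linear he)); ring.
  have eta_eps : 0 <= `|eps| * eta by rewrite mulr_ge0 // ltW.
  (* Far from [uh] the value of [f] drops by a fixed amount (uniform convexity);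
     near [uh] the perturbation [eps * e x] is close to [eps * e uh]. *)
  have [far|close] := lerP c `|x - uh|.
    have fx' := hdel x nx far.
    have dxu : `|x - uh| <= 2 by apply: le_trans (ler_normB _ _) _; lra.
    have hD : D * `|x - uh| <= (D + 1) * 2 by apply: ler_pM => //; rewrite lerDl.
    have : `|eps| * (D * `|x - uh|) <= tau * ((D + 1) * 2).
      by apply: ler_pM; rewrite // mulr_ge0.
    have -> : tau * ((D + 1) * 2) = del * N by rewrite /tau; field; rewrite gt_eqF.
    move: fx'; rewrite -/N mulrBl mul1r; lra.
  have cle : c <= eta / (D + 1) by rewrite /c ge_min lexx.
  have hD : D * `|x - uh| <= (D + 1) * (eta / (D + 1)).
    by apply: ler_pM; rewrite // ?lerDl // ltW // (lt_le_trans close).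
  rewrite [(D + 1) * _]mulrC divfK ?gt_eqF // in hD.
  have : `|eps| * (D * `|x - uh|) <= `|eps| * eta by apply: ler_wpM2l.
  lra.
apply: dnorm_le_linear key.
exact/is_functional_linear/is_functionalD/is_functionalZ.
Qed.

End UniformConvexity.

Section LinearCombinations.
Context {R : realType} {V : Type}.

Lemma eq_lincomb {W : Type} K c (F : nat -> V -> R) (G : nat -> W -> R) z w :
  (forall k, (k < K)%N -> F k z = G k w) -> lincomb K c F z = lincomb K c G w.
Proof. by move=> h; apply: eq_bigr => i _; rewrite h. Qed.

Lemma lincombN K c (F : nat -> V -> R) z :
  lincomb K (fun k => - c k) F z = - lincomb K c F z.
Proof. by rewrite /lincomb -sumrN; apply: eq_bigr => i _; rewrite mulNr. Qed.

Lemma sum_perturb_coef K k (c : nat -> R) (F : nat -> R) eps : (k < K)%N ->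
  \sum_(j < K) (c j + (if nat_of_ord j == k then eps else 0)) * F j =
  \sum_(j < K) c j * F j + eps * F k.
Proof.
move=> hk; rewrite (bigD1 (Ordinal hk)) // [X in _ = X + _](bigD1 (Ordinal hk)) //=.
rewrite eqxx (eq_bigr (fun j : 'I_K => c j * F j)); first by ring.
move=> j hj; have /negbTE -> : nat_of_ord j != k.
  by apply: contra hj => /eqP e; apply/eqP/val_inj.
by rewrite addr0.
Qed.

End LinearCombinations.

Section DualNormPowerSlope.
Context {R : realType} {X : normedModType R}.
Variables (p : R) (Jps : (X -> R) -> X).
Hypothesis hp : 1 < p.
Hypothesis hJps : forall f : X -> R, is_functional f ->
  is_dual_duality (pconj p) f (Jps f).
Local Notation q := (pconj p).
Implicit Types (f e : X -> R).

Local Notation phi f e := (fun eps => q^-1 * dnorm (fun z => f z + eps * e z) `^ q).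

Lemma dnorm_pow_slope_zero f e : is_functional f -> is_functional e ->
  dnorm f = 0 -> slope_le (phi f e) (e (Jps f)).
Proof.
move=> hf he N0 eta eta0.
have q0 := pconj_gt0 hp; have q1 : 0 < q - 1 by rewrite subr_gt0 pconj_gt1.
have u0 : Jps f = 0.
  apply/eqP; rewrite -normr_eq0 (norm_dual_duality hJps hf) N0 powR0 //.
  exact: pconj_sub1_neq0.
set D := dnorm e.
have D0 : 0 <= D by apply/dnorm_ge0/is_functional_bounded.
have D1 : 0 < D + 1 by rewrite ltr_wpDl.
have phiE eps : dnorm (fun z => f z + eps * e z) = `|eps| * D.
  rewrite -dnormZ //; congr dnorm; apply: funext => z.
  by rewrite (dnorm_eq0 hf N0) add0r.
have kap0 : 0 < q * eta / (D + 1) by rewrite divr_gt0 // mulr_gt0.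
have [rho rho0 hrho] := powR_small q1 kap0.
exists (rho / (D + 1)); first by rewrite divr_gt0.
move=> eps heps; rewrite /= !phiE normr0 mul0r powR0 ?gt_eqF // mulr0 subr0.
rewrite u0 (is_linear0 (is_functional_linear he)) mulr0 add0r.
set t := `|eps| * D; have t0 : 0 <= t by rewrite mulr_ge0.
have t_rho : t <= rho.
  have : t <= rho / (D + 1) * (D + 1) by apply: ler_pM => //; rewrite lerDl.
  by rewrite divfK // gt_eqF.
rewrite -(mulr_powRB1 t0 q0).
have ht : t * t `^ (q - 1) <= t * (q * eta / (D + 1)).
  by apply: ler_wpM2l => //; apply: hrho.
have small : eta * (D / (D + 1)) <= eta.
  by rewrite ger_pMr // ler_pdivrMr // mul1r lerDl.
have -> : `|eps| * eta =
    `|eps| * (eta * (D / (D + 1))) + `|eps| * (eta - eta * (D / (D + 1))).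
  by ring.
have -> : `|eps| * (eta * (D / (D + 1))) = q^-1 * (t * (q * eta / (D + 1))).
  by rewrite /t; field; rewrite !gt_eqF.
have : 0 <= `|eps| * (eta - eta * (D / (D + 1))) by rewrite mulr_ge0 // subr_ge0.
have : q^-1 * (t * t `^ (q - 1)) <= q^-1 * (t * (q * eta / (D + 1))).
  by rewrite ler_pM2l ?invr_gt0.
lra.
Qed.

Lemma dnorm_pow_slope_pos f e : uniformly_convex X -> is_functional f ->
  is_functional e -> 0 < dnorm f -> slope_le (phi f e) (e (Jps f)).
Proof.
move=> huc hf he N_gt0 eta eta0.
have q0 := pconj_gt0 hp; have q1 := pconj_gt1 hp.
set N := dnorm f in N_gt0 *; set P := N `^ (q - 1).
have P0 : 0 < P by rewrite powR_gt0.
have [uh [nuh fuh ->]] := dual_duality_unit hp hJps hf N_gt0.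
rewrite (is_linearZ (is_functional_linear he)) -/P; set s := e uh.
have [kap kap0 hkap] := perturbed_slope_le s (ltW P0) eta0.
set eta' := eta / (2 * (P + 1)).
have eta'0 : 0 < eta' by rewrite divr_gt0 ?mulr_gt0 ?ltr_wpDl ?ltW.
have [rho rho0 hrho] := powR_continuous_at (q - 1) N_gt0 kap0.
have [tau tau0 htau] := dnorm_add_le huc hf he nuh fuh N_gt0 eta'0.
have se1 : 0 < `|s| + eta' + 1 by rewrite ltr_wpDl // addr_ge0 // ltW.
exists (Num.min tau (rho / (`|s| + eta' + 1))).
  by rewrite lt_min tau0 divr_gt0.
move=> eps; rewrite le_min => /andP [heps_tau heps_rho] /=.
set c := N + eps * s + `|eps| * eta'.
have hfe : is_functional (fun z => f z + eps * e z).
  by apply: is_functionalD => //; apply: is_functionalZ.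
have hd : dnorm (fun z => f z + eps * e z) <= c by apply: htau.
have d0 : 0 <= dnorm (fun z => f z + eps * e z).
  exact/dnorm_ge0/is_functional_bounded.
have c0 : 0 <= c := le_trans d0 hd.
have hpow : q^-1 * dnorm (fun z => f z + eps * e z) `^ q <= q^-1 * c `^ q.
  rewrite ler_pM2l ?invr_gt0 //.
  by apply: (ge0_ler_powR (ltW q0)) hd; rewrite nnegrE.
(* Convexity of [t ^ q / q] bounds the increment by the slope [c ^ (q - 1)],
   which tends to [P] as [eps] tends to 0. *)
have htan := powR_sub_le_tangent q1 (ltW N_gt0) c0.
have hdist : `|N - c| < rho.
  have -> : N - c = - (eps * s + `|eps| * eta') by rewrite /c; ring.
  rewrite normrN; apply: le_lt_trans (ler_normD _ _) _.
  rewrite normrM (normrM `|eps|) normr_id (gtr0_norm eta'0) -mulrDr.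
  apply: le_lt_trans (_ : _ <= rho / (`|s| + eta' + 1) * (`|s| + eta')) _.
    by apply: ler_wpM2r => //; rewrite addr_ge0 // ltW.
  rewrite -[ltRHS](divfK (lt0r_neq0 se1)) ltr_pM2l ?divr_gt0 //.
  by rewrite ltrDl.
have hslope := hkap _ eps (ltW (hrho _ hdist)).
have -> : q^-1 * dnorm (fun z => f z + 0 * e z) `^ q = q^-1 * N `^ q.
  by congr (_ * dnorm _ `^ _); apply: funext => z; rewrite mul0r addr0.
have eCN : c - N = eps * s + `|eps| * eta' by rewrite /c; ring.
rewrite eCN in htan; rewrite -/eta' in hslope.
lra.
Qed.

Lemma dnorm_pow_slope f e : uniformly_convex X -> is_functional f ->
  is_functional e -> slope_le (phi f e) (e (Jps f)).
Proof.
move=> huc hf he; have [N0|N_gt0] := eqVneq (dnorm f) 0.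
  exact: dnorm_pow_slope_zero.
apply: dnorm_pow_slope_pos => //.
by rewrite lt_def N_gt0; apply/dnorm_ge0/is_functional_bounded.
Qed.

Lemma dnorm_pow_argmin f e b : uniformly_convex X -> is_functional f ->
  is_functional e ->
  (forall eps, q^-1 * dnorm f `^ q <=
     q^-1 * dnorm (fun z => f z + eps * e z) `^ q + eps * b) ->
  e (Jps f) + b = 0.
Proof.
move=> huc hf he hmin; apply: (slope_le_argmin (dnorm_pow_slope huc hf he)) => eps /=.
rewrite (_ : (fun z => f z + 0 * e z) = f) ?hmin //.
by apply: funext => z; rewrite mul0r addr0.
Qed.

Lemma lincomb_argmin_dual_duality K g (w : nat -> X -> R) (beta c0 : nat -> R) :
  uniformly_convex X -> is_functional g ->
  (forall k, (k < K)%N -> is_functional (w k)) ->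
  (forall c, q^-1 * dnorm (fun z => g z - lincomb K c0 w z) `^ q
             + \sum_(k < K) c0 k * beta k <=
             q^-1 * dnorm (fun z => g z - lincomb K c w z) `^ q
             + \sum_(k < K) c k * beta k) ->
  forall k, (k < K)%N -> w k (Jps (fun z => g z - lincomb K c0 w z)) = beta k.
Proof.
move=> huc hg hw hmin k hk.
have hf : is_functional (fun z => g z - lincomb K c0 w z).
  by apply: is_functionalB => //; apply: is_functional_lincomb.
have he : is_functional (fun z => - w k z) by apply/is_functionalN/hw.
suff : - w k (Jps (fun z => g z - lincomb K c0 w z)) + beta k = 0 by lra.
apply: dnorm_pow_argmin huc hf he _ => eps.
have := hmin (fun j => c0 j + (if j == k then eps else 0)).
rewrite sum_perturb_coef //.
have -> : (fun z => g z - lincomb K (fun j => c0 j + (if j == k then eps else 0)) w z) =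
          (fun z => (g z - lincomb K c0 w z) + eps * - w k z).
  apply: funext => z; rewrite /lincomb.
  by rewrite (sum_perturb_coef c0 (fun j => w j z) eps hk); ring.
lra.
Qed.

End DualNormPowerSlope.

(** * The method *)

Section Method.
Context {R : realType} {X Y : completeNormedModType R}.
Variables (A : X -> Y) (y : Y) (p r : R) (N : nat)
  (J : X -> X -> R) (Jps : (X -> R) -> X) (Jr : Y -> Y -> R)
  (x : nat -> X) (v : nat -> nat -> X -> R) (ws : nat -> nat -> Y -> R)
  (s t : nat -> nat -> R) (n : nat).
Hypothesis huc : uniformly_convex X.
Hypothesis hsm : smooth X.
Hypothesis hA : bounded_linear A.
Hypothesis hp : 1 < p.
Hypothesis hJ : forall z : X, is_duality p z (J z).
Hypothesis hJps : forall f : X -> R, is_functional f ->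
  is_dual_duality (pconj p) f (Jps f).
Hypothesis hJr : forall w : Y, is_duality r w (Jr w).
Hypothesis hstep : forall m : nat, (m <= n)%N ->
  algo_step A y p N J Jps Jr x v ws s t m.
Local Notation q := (pconj p).
Local Notation u m := (fun z => Jr (A (x m) - y) (A z)).
Local Notation g m := (fun z => J (x m) z - lincomb (Nn N m) (t m) (v m) z).

Lemma algo_stepE m : (m <= n)%N ->
  (forall c, dnorm (fun z => u m z - lincomb (Nprev N m) (s m) (v m.-1) z) `^ q <=
     dnorm (fun z => u m z - lincomb (Nprev N m) c (v m.-1) z) `^ q) /\
  v m (Nn N m).-1 = (fun z => u m z - lincomb (Nprev N m) (s m) (v m.-1) z) /\
  ws m (Nn N m).-1 =
    (fun w => Jr (A (x m) - y) w - lincomb (Nprev N m) (s m) (ws m.-1) w) /\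
  (forall k, (k < (Nn N m).-1)%N ->
     v m k = v m.-1 (Nprev N m - (Nn N m).-1 + k)%N /\
     ws m k = ws m.-1 (Nprev N m - (Nn N m).-1 + k)%N) /\
  (forall c, q^-1 * dnorm (g m) `^ q + \sum_(k < Nn N m) t m k * ws m k y <=
     q^-1 * dnorm (fun z => J (x m) z - lincomb (Nn N m) c (v m) z) `^ q
     + \sum_(k < Nn N m) c k * ws m k y) /\
  x m.+1 = Jps (g m).
Proof. by move=> /hstep [_ [? [? [? [? [? ?]]]]]]. Qed.

Definition directions_adjoint m := forall k, (k < Nn N m)%N ->
  is_functional (ws m k) /\ v m k = (fun z => ws m k (A z)).

Lemma is_functional_Jr w : is_functional (Jr w). Proof. by case: (hJr w). Qed.

Lemma directions_adjoint_step m : (m <= n)%N ->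
  (forall k, (k < Nprev N m)%N ->
     is_functional (ws m.-1 k) /\ v m.-1 k = (fun z => ws m.-1 k (A z))) ->
  directions_adjoint m.
Proof.
move=> hm prev k hk; have [_ [hvnew [hwnew [hold _]]]] := algo_stepE hm.
have [k_last|k_old] : k = (Nn N m).-1 \/ (k < (Nn N m).-1)%N by lia.
  rewrite k_last hvnew hwnew; split.
    apply: is_functionalB; first exact: is_functional_Jr.
    by apply: is_functional_lincomb => j hj; case: (prev j hj).
  apply: funext => z; congr (_ - _).
  by apply: eq_lincomb => j hj; case: (prev j hj) => _ ->.
have [-> ->] := hold k k_old.
by apply: prev; move: k_old; rewrite /Nprev /Nn; lia.
Qed.

Lemma directions_adjointP m : (m <= n)%N -> directions_adjoint m.
Proof.
elim: m => [|m IH] hm; apply: directions_adjoint_step => // k hk.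
exact: (IH (ltnW hm)).
Qed.

Lemma is_functional_ws m k : (m <= n)%N -> (k < Nn N m)%N -> is_functional (ws m k).
Proof. by move=> hm hk; case: (directions_adjointP hm hk). Qed.

Lemma directions_adjointE m k : (m <= n)%N -> (k < Nn N m)%N ->
  v m k = (fun z => ws m k (A z)).
Proof. by move=> hm hk; case: (directions_adjointP hm hk). Qed.

Lemma is_functional_v m k : (m <= n)%N -> (k < Nn N m)%N -> is_functional (v m k).
Proof.
move=> hm hk; rewrite (directions_adjointE hm hk).
exact: is_functional_comp hA (is_functional_ws hm hk).
Qed.

Lemma duality_iterate_step m : (m <= n)%N -> J (x m.+1) = g m.
Proof.
move=> hm; have [_ [_ [_ [_ [_ ->]]]]] := algo_stepE hm.
apply: (duality_dual_duality hp hJ hJps hsm).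
apply: is_functionalB; first exact: duality_functional hJ (x m).
by apply: is_functional_lincomb => k hk; apply: is_functional_v.
Qed.

Lemma directions_on_solutions z : A z = y ->
  forall k, (k < Nn N n)%N -> v n k z = ws n k y.
Proof. by move=> hz k hk; rewrite (directions_adjointE (leqnn n) hk) hz. Qed.

Lemma duality_increment_span m : (m <= n)%N ->
  (fun z => J (x m) z - J (x 0%N) z) =
  (fun z => \sum_(i < m) lincomb (Nn N i) (fun k => - t i k) (v i) z).
Proof.
elim: m => [|m IH] hm; apply: funext => z; first by rewrite subrr big_ord0.
have := congr1 (fun h => h z) (IH (ltnW hm)) => /= IHz.
rewrite big_ord_recr /= -IHz (duality_iterate_step (ltnW hm)) lincombN; ring.
Qed.

Lemma duality_increment_range_adj :
  in_closure_range_adj A (fun z => J (x n) z - J (x 0%N) z).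
Proof.
move=> eps eps0.
exists (fun w => \sum_(i < n) lincomb (Nn N i) (fun k => - t i k) (ws i) w); split.
  apply: (is_functional_sum
    (F := fun i w => lincomb (Nn N i) (fun k => - t i k) (ws i) w)) => i hi.
  by apply: is_functional_lincomb => k hk; apply: is_functional_ws => //; exact: ltnW.
apply: le_lt_trans (dnorm_le (B := 0) _) eps0 => z _.
have := congr1 (fun h => h z) (duality_increment_span (leqnn n)) => /= ->.
rewrite normr_le0 subr_eq0; apply/eqP.
apply: eq_bigr => i _; apply: eq_lincomb => k hk.
by rewrite (directions_adjointE _ hk) // ltnW.
Qed.

Lemma iterate_in_hyperplanes k : (k < Nn N n)%N -> v n k (x n.+1) = ws n k y.
Proof.
move=> hk; have [_ [_ [_ [_ [hmin ->]]]]] := algo_stepE (leqnn n).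
apply: (lincomb_argmin_dual_duality hp hJps huc (beta := fun k => ws n k y)) => //.
  exact: duality_functional hJ (x n).
by move=> j hj; apply: is_functional_v.
Qed.

Lemma iterate_bregman_projection z :
  (forall k, (k < Nn N n)%N -> v n k z = ws n k y) ->
  Dp p J (x n) (x n.+1) <= Dp p J (x n) z.
Proof.
move=> hz; have xs := duality_iterate_step (leqnn n).
have eJ w : J (x n) w = J (x n.+1) w + lincomb (Nn N n) (t n) (v n) w.
  by rewrite xs /=; ring.
have Lz : lincomb (Nn N n) (t n) (v n) z = lincomb (Nn N n) (t n) (v n) (x n.+1).
  by apply: eq_lincomb => k hk; rewrite hz // iterate_in_hyperplanes.
(* Three-point identity: [Dp (x n) z = Dp (x n) (x n.+1) + Dp (x n.+1) z]. *)
have := Dp_ge0 hp hJ (x n.+1) z; rewrite /Dp !eJ Lz (duality_self hJ) => hD.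
have : q^-1 * `|x n.+1| `^ p + p^-1 * `|x n.+1| `^ p = `|x n.+1| `^ p.
  by rewrite -mulrDl addrC (invr_add_pconj hp) mul1r.
lra.
Qed.

Lemma dual_iterate_bregman_projection z : A z = y ->
  (exists c : nat -> R,
     J (x n.+1) = (fun z' => J (x n) z' + lincomb (Nn N n) c (v n) z')) /\
  (forall c : nat -> R,
     Dps p Jps (J z) (J (x n.+1)) <=
     Dps p Jps (J z) (fun z' => J (x n) z' + lincomb (Nn N n) c (v n) z')).
Proof.
move=> hz; have xs := duality_iterate_step (leqnn n); split.
  exists (fun k => - t n k); rewrite xs.
  by apply: funext => w; rewrite lincombN.
move=> c; have [_ [_ [_ [_ [hmin _]]]]] := algo_stepE (leqnn n).
have := hmin (fun k => - c k).
rewrite (_ : (fun z0 => _ - lincomb _ (fun k => - c k) _ z0) =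
             (fun z' => J (x n) z' + lincomb (Nn N n) c (v n) z')); last first.
  by apply: funext => w; rewrite lincombN opprK.
have lz c' : lincomb (Nn N n) c' (v n) z = \sum_(k < Nn N n) c' k * ws n k y.
  by apply: eq_bigr => i _; rewrite (directions_on_solutions hz (ltn_ord i)).
(* On [M], [Dps (J z) (J (x n) + sum_k c_k v_(n,k))] is [h_n (- c)] plus a constant. *)
rewrite -(lz (fun k => - c k)) -(lz (t n)) lincombN.
rewrite /Dps (dual_duality_duality hp hJ hJps huc z) xs /=.
lra.
Qed.

Lemma direction_bregman_projection :
  let a := Jps (v n (Nn N n).-1) in
  let b := Jps (u n) in
  let Vperp := fun z : X => forall k : nat, (k < Nprev N n)%N -> v n.-1 k z = 0 in
  Vperp a /\ (forall z : X, Vperp z -> Dp p J b a <= Dp p J b z).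
Proof.
move=> a b Vperp; have [hsmin [hvnew _]] := algo_stepE (leqnn n).
have hu : is_functional (u n).
  exact: is_functional_comp hA (is_functional_Jr _).
have prevf k : (k < Nprev N n)%N -> is_functional (v n.-1 k).
  move=> hk; apply: is_functional_v; first exact: leq_pred.
  by move: hk; rewrite /Nprev /Nn; lia.
set vnew := fun z => u n z - lincomb (Nprev N n) (s n) (v n.-1) z.
have hv : is_functional vnew.
  by apply: is_functionalB => //; apply: is_functional_lincomb.
have ea : a = Jps vnew by rewrite /a hvnew.
have Va : Vperp a.
  move=> k hk; rewrite ea.
  apply: (lincomb_argmin_dual_duality hp hJps huc (beta := fun _ => 0)) => // c.
  rewrite !big1 ?addr0 => [|i _|i _]; rewrite ?mulr0 //.
  by rewrite ler_pM2l ?invr_gt0 ?(pconj_gt0 hp) //; apply: hsmin.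
(* On [Vperp], [J b = u n] agrees with [vnew], so minimizing [Dp p J b] there means
   maximizing [vnew z - |z|^p / p], which [Jps vnew] does. *)
split => // z hz.
have uz w : Vperp w -> u n w = vnew w.
  by move=> hw; rewrite /vnew /lincomb big1 ?subr0 // => i _; rewrite hw ?mulr0.
have Jb : J b = u n by apply: (duality_dual_duality hp hJ hJps hsm).
rewrite /Dp Jb (uz _ hz) (uz _ Va) ea.
have := dual_duality_max hp hJps z hv; lra.
Qed.

End Method.

Theorem mainTheorem6 (R : realType) (X Y : completeNormedModType R)
  (A : X -> Y) (y : Y) (p r : R) (N : nat)
  (J : X -> X -> R) (Jps : (X -> R) -> X) (Jr : Y -> Y -> R)
  (x : nat -> X) (v : nat -> nat -> X -> R) (ws : nat -> nat -> Y -> R)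
  (s t : nat -> nat -> R) (n : nat) :
  uniformly_convex X -> smooth X ->
  bounded_linear A -> (exists x', A x' = y) ->
  1 < p -> 1 < r -> (0 < N)%N ->
  (forall z : X, is_duality p z (J z)) ->
  (forall f : X -> R, is_functional f -> is_dual_duality (pconj p) f (Jps f)) ->
  (forall w : Y, is_duality r w (Jr w)) ->
  in_closure_range_adj A (J (x 0%N)) ->
  (forall m : nat, (m <= n)%N -> algo_step A y p N J Jps Jr x v ws s t m) ->
  let beta := fun m k => ws m k y in
  let H := fun z : X => forall k : nat, (k < Nn N n)%N -> v n k z = beta n k in
  (* (a) *)
  (forall z : X, A z = y -> H z) /\
  (* (b) *)
  ((exists c : nat -> nat -> R,
      (fun z => J (x n) z - J (x 0%N) z) =
      (fun z => \sum_(m < n) lincomb (Nn N m) (c m) (v m) z)) /\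
   in_closure_range_adj A (fun z => J (x n) z - J (x 0%N) z)) /\
  (* (c) *)
  (H (x n.+1) /\ (forall z : X, H z -> Dp p J (x n) (x n.+1) <= Dp p J (x n) z)) /\
  (forall z : X, A z = y ->
     (exists c : nat -> R,
        J (x n.+1) = (fun z' => J (x n) z' + lincomb (Nn N n) c (v n) z')) /\
     (forall c : nat -> R,
        Dps p Jps (J z) (J (x n.+1)) <=
        Dps p Jps (J z) (fun z' => J (x n) z' + lincomb (Nn N n) c (v n) z'))) /\
  (* (d) *)
  (let a := Jps (v n (Nn N n).-1) in
   let b := Jps (fun z => Jr (A (x n) - y) (A z)) in
   let Vperp := fun z : X => forall k : nat, (k < Nprev N n)%N -> v n.-1 k z = 0 in
   Vperp a /\ (forall z : X, Vperp z -> Dp p J b a <= Dp p J b z)).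
Proof.
move=> huc hsm hA _ hp _ _ hJ hJps hJr _ hstep beta H.
split; first exact: directions_on_solutions hp hJr hstep.
split.
  split; last exact: duality_increment_range_adj hsm hA hp hJ hJps hJr hstep.
  exists (fun i k => - t i k).
  exact (duality_increment_span hsm hA hp hJ hJps hJr hstep (leqnn n)).
split.
  split; first exact: iterate_in_hyperplanes huc hA hp hJ hJps hJr hstep.
  exact: iterate_bregman_projection huc hsm hA hp hJ hJps hJr hstep.
split; first exact: dual_iterate_bregman_projection huc hsm hA hp hJ hJps hJr hstep.
exact: direction_bregman_projection huc hsm hA hp hJ hJps hJr hstep.
Qed.
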